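(* Let $d\in\mathbb N$, $\mathcal D=\{1,\dots,d\}$, $f\in \mathrm L_2(\mathbb T^d)$ and let $U\subseteq\mathcal P(\mathcal D)$ be a subset of ANOVA terms. Then $$\mathrm T_Uf=\sum_{\mathbf u\in U}\ \sum_{\substack{\mathbf v\in U\\ \mathbf u\subseteq\mathbf v}}(-1)^{|\mathbf v|-|\mathbf u|}\,\mathrm P_{\mathbf u}f.$$
   Context: $\mathbb T=[0,1)$ with periodic identification. For $\mathbf u\subseteq\mathcal D$, $\mathbf u^c=\mathcal D\setminus\mathbf u$, $\mathbf x_{\mathbf u}=(x_i)_{i\in\mathbf u}$. Projection: $\mathrm P_{\mathbf u}f(\mathbf x_{\mathbf u})=\int_{\mathbb T^{|\mathbf u^c|}}f(\mathbf x)\,d\mathbf x_{\mathbf u^c}$, viewed as a function on $\mathbb T^d$. ANOVA terms: $f_{\mathbf u}=\mathrm P_{\mathbf u}f-\sum_{\mathbf v\subsetneq\mathbf u}f_{\mathbf v}$ (recursively). A subset of ANOVA terms is a set $U\subseteq\mathcal P(\mathcal D)$ such that $\mathbf u\in U$, $\mathbf v\subseteq\mathbf u$ imply $\mathbf v\in U$; $\mathrm T_Uf=\sum_{\mathbf u\in U}f_{\mathbf u}$. *)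

From HB Require Import structures.
From mathcomp Require Import all_boot all_order all_algebra.
From mathcomp Require Import all_classical all_reals all_analysis.
From mathcomp Require Import complex.

Set Implicit Arguments.
Unset Strict Implicit.
Unset Printing Implicit Defensive.

Import Order.TTheory GRing.Theory Num.Theory.
Import numFieldNormedType.Exports.
Local Open Scope classical_set_scope.
Local Open Scope ring_scope.

Section Anova.
Context {R : realType} {d : nat}.

(* Points of T^d are represented by d-tuples of reals (coordinates in [0,1)
   are the relevant ones; T = [0,1) with periodic identification).
   [upd x i t] replaces the i-th coordinate of x by t. *)
Definition upd (x : d.-tuple R) (i : 'I_d) (t : R) : d.-tuple R :=
  [tuple if j == i then t else tnth x j | j < d].

Definition cint (g : R -> R[i]) : R[i] :=
  Complex (Rintegral lebesgue_measure `[0%R, 1%R[ (fun t => complex.Re (g t)))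
          (Rintegral lebesgue_measure `[0%R, 1%R[ (fun t => complex.Im (g t))).

Definition int_coord (i : 'I_d) (g : d.-tuple R -> R[i]) : d.-tuple R -> R[i] :=
  fun x => cint (fun t => g (upd x i t)).

(* Projection P_u f (x) = \int_{T^{|u^c|}} f(x) dx_{u^c}, realized as the
   iterated integral over the coordinates of u^c (in increasing order). *)
Definition Pu (u : {set 'I_d}) (f : d.-tuple R -> R[i]) : d.-tuple R -> R[i] :=
  foldr int_coord f (enum (~: u)).

Definition int_all (g : d.-tuple R -> \bar R) : \bar R :=
  foldr (fun i h x => (\int[lebesgue_measure]_(t in `[0%R, 1%R[) h (upd x i t))%E)
        g (enum 'I_d) [tuple 0%R | _ < d].

(* f \in L_2(T^d): f measurable (product Borel sigma-algebra on d-tuples)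
   and \int_{T^d} |f|^2 < +oo (by Tonelli the iterated integral equals the
   integral w.r.t. the product Lebesgue measure). *)
Definition L2T (f : d.-tuple R -> R[i]) : Prop :=
  measurable_fun setT (fun x => complex.Re (f x)) /\
  measurable_fun setT (fun x => complex.Im (f x)) /\
  (int_all (fun x => ((complex.Re (f x)) ^+ 2 + (complex.Im (f x)) ^+ 2)%:E) < +oo)%E.

(* ANOVA terms f_u = P_u f - \sum_{v \subsetneq u} f_v, computed by
   recursion with a fuel parameter (fuel #|u| suffices). *)
Fixpoint anova_fuel (n : nat) (f : d.-tuple R -> R[i]) (u : {set 'I_d})
  : d.-tuple R -> R[i] :=
  match n with
  | 0 => Pu u f
  | n'.+1 => fun x => Pu u f x -
      \sum_(v : {set 'I_d} | v \proper u) anova_fuel n' f v x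
  end.

Definition anova (f : d.-tuple R -> R[i]) (u : {set 'I_d}) : d.-tuple R -> R[i] :=
  anova_fuel #|u| f u.

Definition anova_subset (U : {set {set 'I_d}}) : Prop :=
  forall u v : {set 'I_d}, u \in U -> v \subset u -> v \in U.

Definition TU (U : {set {set 'I_d}}) (f : d.-tuple R -> R[i]) : d.-tuple R -> R[i] :=
  fun x => \sum_(u in U) anova f u x.

End Anova.

(* The recursive definition of the ANOVA terms, f_u = P_u f - sum_{v < u} f_v,
   is inverted on the Boolean lattice of subsets: f_u is the Moebius sum
   sum_{w <= u} (-1)^(|u|-|w|) P_w f, since the alternating sum of
   (-1)^(|v|-|w|) over an interval w <= v <= u vanishes when w < u (toggling
   one element of u \ w pairs off its terms).  Summing over the downward closed
   U and exchanging the two sums gives the formula.  The identity holds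
   pointwise for every f. *)

From HB Require Import structures.
From mathcomp Require Import all_boot all_order all_algebra.
From mathcomp Require Import all_classical all_reals all_analysis.
From mathcomp Require Import complex.
Import Order.TTheory GRing.Theory Num.Theory.
Local Open Scope ring_scope.

Section SubsetMobius.
Variables (K : pzRingType) (I : finType).

Lemma sum_sign_interval_eq0 (w u : {set I}) : w \proper u ->
  \sum_(v : {set I} | (w \subset v) && (v \subset u)) (-1) ^+ (#|v| - #|w|)
  = 0 :> K.
Proof.
case/properP=> _ [a au aNw].
rewrite (bigID (fun v : {set I} => a \in v)) /=.
rewrite (reindex_onto (fun v => a |: v) (fun v => v :\ a)) /=; last first.
  by move=> v /andP[_ av]; rewrite finset.setD1K.
apply/eqP; rewrite addrC addr_eq0 -sumrN; apply/eqP.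
apply: eq_big => [v | v /andP[/andP[wv _] aNv]]; last first.
  by rewrite cardsU1 aNv add1n subSn ?subset_leq_card // exprS mulN1r opprK.
have [av | aNv] := boolP (a \in v).
  rewrite andbF; apply/esym/negbTE.
  by apply: contraL av => /andP[_ /eqP <-]; rewrite setD11.
have -> : (w \subset a |: v) = (w \subset v).
  by rewrite -{2}(setU1K aNv) subsetD1 aNw andbT.
by rewrite setU1K // eqxx finset.subUset finset.sub1set setU11 au !andbT.
Qed.

Lemma sum_sign_proper_interval (w u : {set I}) : w \proper u ->
  \sum_(v : {set I} | (v \proper u) && (w \subset v)) (-1) ^+ (#|v| - #|w|)
  = - (-1) ^+ (#|u| - #|w|) :> K.
Proof.
move=> wu; have /sum_sign_interval_eq0 := wu.
rewrite (bigD1 u) /= ?subxx ?proper_sub // => /(canRL (addKr _)).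
rewrite addr0 => <-.
apply: eq_bigl => v; rewrite finset.properEneq.
by case: (w \subset v); case: (v \subset u); case: (v != u).
Qed.

Definition subset_mobius (g : {set I} -> K) (u : {set I}) : K :=
  \sum_(w : {set I} | w \subset u) (-1) ^+ (#|u| - #|w|) * g w.

Lemma subset_mobiusE (g : {set I} -> K) (u : {set I}) :
  subset_mobius g u = g u - \sum_(v : {set I} | v \proper u) subset_mobius g v.
Proof.
rewrite /subset_mobius (exchange_big_dep (fun w : {set I} => w \proper u)) /=;
  last by move=> v w vu wv; apply: sub_proper_trans wv vu.
rewrite (bigD1 u) //= subnn expr0 mul1r -sumrN; congr (_ + _).
apply: eq_big => [w | w]; first by rewrite finset.properEneq andbC.
rewrite andbC -finset.properEneq => wu.
by rewrite -big_distrl /= sum_sign_proper_interval // mulNr opprK.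
Qed.

End SubsetMobius.

Arguments subset_mobius {K I} g u.

Section AnovaMobius.
Variables (R : realType) (d : nat) (f : d.-tuple R -> R[i]) (x : d.-tuple R).

Lemma anova_fuelE n (u : {set 'I_d}) : (#|u| <= n)%N ->
  anova_fuel n f u x = subset_mobius (fun w => Pu w f x) u.
Proof.
elim: n u => [|n IHn] u un /=; rewrite subset_mobiusE.
  rewrite big_pred0 ?subr0 // => v.
  move: un; rewrite leqn0 cards_eq0 => /eqP ->.
  by rewrite finset.properEneq finset.subset0 andNb.
congr (_ - _); apply: eq_bigr => v vu.
by apply: IHn; apply: leq_trans (proper_card vu) un.
Qed.

Lemma anovaE (u : {set 'I_d}) : anova f u x = subset_mobius (fun w => Pu w f x) u.
Proof. exact: anova_fuelE. Qed.

End AnovaMobius.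

Theorem lemma4p4 (R : realType) (d : nat) (f : d.-tuple R -> R[i])
  (U : {set {set 'I_d}}) :
  L2T f -> anova_subset U ->
  forall x : d.-tuple R,
    TU U f x =
    \sum_(u in U) \sum_(v in U | u \subset v)
       (-1) ^+ (#|v| - #|u|) * Pu u f x.
Proof.
move=> _ downU x; rewrite /TU.
under eq_bigr => u _ do rewrite anovaE /subset_mobius.
exact: exchange_big_dep downU.
Qed.
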